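(* Let $\rho_Q(x)$ be a family of density operators on a quantum system $Q$, depending differentiably on a real parameter $x$. Let $\{\mathcal{F}_\alpha\}_{\alpha=1}^{J}$ be a selection measurement on $Q$, where each $\mathcal{F}_\alpha(\rho)=\sum_{j=0}^{J_\alpha-1}M_{\alpha,j}\rho M_{\alpha,j}^\dagger$ is a quantum operation with Kraus operators $M_{\alpha,j}$ and $\sum_{\alpha=1}^J\sum_{j}M_{\alpha,j}^\dagger M_{\alpha,j}=\mathbb{1}_Q$. Write $p(\alpha|x)=\mathrm{Tr}\{\mathcal{F}_\alpha[\rho_Q(x)]\}$ (assumed positive) and $\sigma_{Q|\alpha}(x)=\mathcal{F}_\alpha[\rho_Q(x)]/p(\alpha|x)$. Let $\checkmark\subseteq\{1,\dots,J\}$ be a set of favorable outcomes with complement $\times$, and put $p(\checkmark|x)=\sum_{\alpha\in\checkmark}p(\alpha|x)$, $p(\times|x)=1-p(\checkmark|x)$, both assumed positive. Let $\{|f_\alpha\rangle\}_{\alpha=1}^J$ be orthonormal ancilla states, let $|f_0\rangle$ be an ancilla state orthogonal to all $|f_\alpha\rangle$ with $\alpha\in\checkmark$, and let $|\phi\rangle$ be a fixed state of $Q$ independent of $x$. Define $$\sigma_{QA}(x)=\sum_{\alpha=1}^J p(\alpha|x)\,\sigma_{Q|\alpha}(x)\otimes|f_\alpha\rangle\langle f_\alpha|,$$ $$\sigma_{QA,\checkmark}(x)=\sum_{\alpha\in\checkmark}p(\alpha|x)\,\sigma_{Q|\alpha}(x)\otimes|f_\alpha\rangle\langle f_\alpha|+p(\times|x)\,|\phi\rangle\langle\phi|\otimes|f_0\rangle\langle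 f_0|,$$ $$\sigma_{QA|\checkmark}(x)=\sum_{\alpha\in\checkmark}\frac{p(\alpha|x)}{p(\checkmark|x)}\,\sigma_{Q|\alpha}(x)\otimes|f_\alpha\rangle\langle f_\alpha|.$$ Then the quantum Fisher informations satisfy $$I_{\rho_Q}(x)\ge I_{\sigma_{QA}}(x)\ge I_{\sigma_{QA,\checkmark}}(x)\ge p(\checkmark|x)\,I_{\sigma_{QA|\checkmark}}(x).$$ Moreover, when $\checkmark=\{\alpha\}$ consists of a single outcome, $p(\checkmark|x)\,I_{\sigma_{QA|\checkmark}}(x)=p(\alpha|x)\,I_{\sigma_{Q|\alpha}}(x)$, so the final entry of the chain is $p(\alpha|x)I_{\sigma_{Q|\alpha}}(x)$.
   Context: For a differentiable family of density operators $\rho(x)$, the quantum Fisher information is $I_\rho(x)=\mathrm{Tr}[\rho(x)L(x)^2]$, where the symmetric logarithmic derivative $L(x)$ is a Hermitian operator satisfying $\partial_x\rho(x)=\tfrac12[L(x)\rho(x)+\rho(x)L(x)]$. *)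

From HB Require Import structures.
From mathcomp Require Import all_boot all_algebra.
From mathcomp Require Import complex mxtens.
From mathcomp Require Import reals topology normedtype derive.
Set Implicit Arguments.
Unset Strict Implicit.
Unset Printing Implicit Defensive.
Import GRing.Theory Num.Theory numFieldNormedType.Exports.
Local Open Scope ring_scope.

Section QDefs.
Variable R : realType.
Local Notation C := (R[i]).

Definition adjmx {p q : nat} (A : 'M[C]_(p, q)) : 'M[C]_(q, p) :=
  (map_mx (@conjc R) A)^T.

Definition hermitian {p : nat} (A : 'M[C]_p) : Prop := adjmx A = A.

(* positive semidefinite: <v|A|v> >= 0 for all v (order of R[i]: real and >= 0) *)
Definition psd {p : nat} (A : 'M[C]_p) : Prop :=
  forall v : 'cV[C]_p, 0 <= (adjmx v *m A *m v) 0 0.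

Definition density {p : nat} (A : 'M[C]_p) : Prop :=
  hermitian A /\ psd A /\ \tr A = 1.

Definition mx_is_derive {p q : nat} (F : R -> 'M[C]_(p, q)) (x : R)
    (D : 'M[C]_(p, q)) : Prop :=
  forall i j, is_derive x (1 : R) (fun y => complex.Re (F y i j)) (complex.Re (D i j)) /\
              is_derive x (1 : R) (fun y => complex.Im (F y i j)) (complex.Im (D i j)).

Definition mx_differentiable {p q : nat} (F : R -> 'M[C]_(p, q)) : Prop :=
  forall y, exists D, mx_is_derive F y D.

Definition is_SLD {p : nat} (rho : R -> 'M[C]_p) (x : R) (L : 'M[C]_p) : Prop :=
  hermitian L /\ exists D, mx_is_derive rho x D /\
    D = (2%:R : C)^-1 *: (L *m rho x + rho x *m L).

Definition qfi {p : nat} (rho : R -> 'M[C]_p) (x : R) (L : 'M[C]_p) : R :=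
  complex.Re (\tr (rho x *m (L *m L))).

Definition ketbra {p : nat} (f : 'cV[C]_p) : 'M[C]_p := f *m adjmx f.

Definition real_C (r : R) : C := Complex r 0.

Section Selection.
Variables (n m J : nat) (Ja : 'I_J -> nat)
  (M : forall a : 'I_J, 'I_(Ja a) -> 'M[C]_n) (rho : R -> 'M[C]_n).

Definition qop (a : 'I_J) (r : 'M[C]_n) : 'M[C]_n :=
  \sum_(j < Ja a) (@M a j *m r *m adjmx (@M a j)).

Definition prob (a : 'I_J) (x : R) : R := complex.Re (\tr (qop a (rho x))).

Definition sigma_cond (a : 'I_J) (x : R) : 'M[C]_n :=
  real_C (prob a x)^-1 *: qop a (rho x).

Variables (ok : {set 'I_J}) (f : 'I_J -> 'cV[C]_m) (f0 : 'cV[C]_m)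
  (phi : 'cV[C]_n).

Definition prob_ok (x : R) : R := \sum_(a in ok) prob a x.
Definition prob_no (x : R) : R := 1 - prob_ok x.

Definition sigma_QA (x : R) : 'M[C]_(n * m) :=
  \sum_(a < J) real_C (prob a x) *: (sigma_cond a x *t ketbra (f a)).

Definition sigma_QA_ok (x : R) : 'M[C]_(n * m) :=
  \sum_(a in ok) real_C (prob a x) *: (sigma_cond a x *t ketbra (f a))
  + real_C (prob_no x) *: (ketbra phi *t ketbra f0).

Definition sigma_QA_cond (x : R) : 'M[C]_(n * m) :=
  \sum_(a in ok) real_C (prob a x / prob_ok x) *: (sigma_cond a x *t ketbra (f a)).

End Selection.
End QDefs.

(* Each state of the chain is the image of the previous one under a completely
   positive map A |-> \sum_k K_k A K_k^*: record the outcome alpha in the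
   ancilla, replace the unfavourable branches by |phi>|f_0>, and project onto
   the favourable records.  Such a map cannot increase the quantum Fisher
   information: if L' is the SLD of the image and G = \sum_k K_k^* L' K_k, then
   2 Tr(rho' L') - Tr(rho' L'^2) <= Tr(rho L^2) follows from
   Tr(rho (G - L)^2) >= 0 and the Kadison-Schwarz inequality
   G^2 <= \sum_k K_k^* L'^2 K_k.  The last map is not trace preserving; its
   image is p(ok|x) sigma_{QA|ok}(x) with Tr sigma_{QA|ok} = 1, so the
   derivative of p(ok|x) drops out (Tr sigma' = 0) and only the factor p(ok|x)
   survives.  For ok = {alpha}, sigma_{QA|ok} is an isometric image of
   sigma_{Q|alpha}, and isometries preserve the Fisher information. *)

From Pilot Require Import Defs.
From HB Require Import structures.
From mathcomp Require Import all_boot all_algebra.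
From mathcomp Require Import complex mxtens.
From mathcomp Require Import reals topology normedtype derive.
From mathcomp Require Import order lra.
Import Order.TTheory GRing.Theory Num.Theory numFieldNormedType.Exports.
Local Open Scope ring_scope.

Set Implicit Arguments.
Unset Strict Implicit.
Unset Printing Implicit Defensive.

Section ComplexMatrix.
Variable R : realType.
Local Notation C := R[i].

Lemma real_CE (r : R) : real_C r = (r%:C)%C.
Proof. by []. Qed.

Lemma ReD (a b : C) : complex.Re (a + b) = complex.Re a + complex.Re b.
Proof. exact: (raddfD (@complex.Re R : Rcomplex R -> R)). Qed.

Lemma ImD (a b : C) : complex.Im (a + b) = complex.Im a + complex.Im b.
Proof. exact: (raddfD (@complex.Im R : Rcomplex R -> R)). Qed.

Lemma ReB (a b : C) : complex.Re (a - b) = complex.Re a - complex.Re b.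
Proof. exact: (raddfB (@complex.Re R : Rcomplex R -> R)). Qed.

Lemma real_CM (a b : R) : real_C (a * b) = real_C a * real_C b.
Proof. by rewrite !real_CE rmorphM. Qed.

Lemma Re_realM (r : R) (z : C) : complex.Re (real_C r * z) = r * complex.Re z.
Proof. by case: z => a b; rewrite /= mul0r subr0. Qed.

Lemma Im_realM (r : R) (z : C) : complex.Im (real_C r * z) = r * complex.Im z.
Proof. by case: z => a b; rewrite /= mul0r addr0. Qed.

Lemma Re_sum (I : finType) (P : pred I) (F : I -> C) :
  complex.Re (\sum_(i | P i) F i) = \sum_(i | P i) complex.Re (F i).
Proof. exact: (raddf_sum (@complex.Re R : Rcomplex R -> R)). Qed.

Lemma Re_trace_sum p (I : finType) (P : pred I) (F : I -> 'M[C]_p) :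
  complex.Re (\tr (\sum_(i | P i) F i)) = \sum_(i | P i) complex.Re (\tr (F i)).
Proof. by rewrite (raddf_sum (@mxtrace _ p)) Re_sum. Qed.

Lemma adjmx_is_zmod_morphism p q : zmod_morphism (@adjmx R p q).
Proof. by move=> A B; rewrite /adjmx raddfB /= linearB. Qed.

HB.instance Definition _ p q := GRing.isZmodMorphism.Build 'M[C]_(p, q) 'M[C]_(q, p)
  (@adjmx R p q) (@adjmx_is_zmod_morphism p q).

Lemma adjmxE p q (A : 'M[C]_(p, q)) i j : adjmx A i j = (A j i)^*%C.
Proof. by rewrite !mxE. Qed.

Lemma adjmxK p q (A : 'M[C]_(p, q)) : adjmx (adjmx A) = A.
Proof. by apply/matrixP => i j; rewrite !adjmxE conjcK. Qed.

Lemma adjmxM p q r (A : 'M[C]_(p, q)) (B : 'M[C]_(q, r)) :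
  adjmx (A *m B) = adjmx B *m adjmx A.
Proof. by rewrite /adjmx map_mxM trmx_mul. Qed.

Lemma adjmx1 p : adjmx (1%:M : 'M[C]_p) = 1%:M.
Proof. by apply/matrixP => i j; rewrite !mxE eq_sym rmorph_nat. Qed.

End ComplexMatrix.

Section Positivity.
Variable R : realType.
Local Notation C := R[i].

Lemma Re_ge0 (z : C) : 0 <= z -> 0 <= complex.Re z.
Proof. by case: z => a b; rewrite lecE => /andP[]. Qed.

Lemma trace_psd_mul_ge0 p k (rho : 'M[C]_p) (B : 'M[C]_(k, p)) :
  psd rho -> 0 <= \tr (rho *m (adjmx B *m B)).
Proof.
move=> Hrho; rewrite mulmxA mxtrace_mulC mulmxA; apply: sumr_ge0 => i _.
have -> : (B *m rho *m adjmx B) i i =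
    (adjmx (adjmx (row i B)) *m rho *m adjmx (row i B)) 0 0.
  rewrite adjmxK !mxE; apply: eq_bigr => j _; rewrite !mxE; congr (_ * _).
  by apply: eq_bigr => l _; rewrite !mxE.
exact: Hrho.
Qed.

Lemma Re_trace_psd_mul_ge0 p k (rho : 'M[C]_p) (B : 'M[C]_(k, p)) :
  psd rho -> 0 <= complex.Re (\tr (rho *m (adjmx B *m B))).
Proof. by move=> /(trace_psd_mul_ge0 B) /Re_ge0. Qed.

Lemma psd_trace_real p (rho : 'M[C]_p) : psd rho -> \tr rho = real_C (complex.Re (\tr rho)).
Proof.
move=> /(trace_psd_mul_ge0 1%:M); rewrite adjmx1 !mulmx1 => /ger0_real /RRe_real.
by rewrite real_CE.
Qed.

Lemma psd_realZ p r (A : 'M[C]_p) : 0 <= r -> psd A -> psd (real_C r *: A).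
Proof.
move=> r_ge0 HA v; rewrite -scalemxAr -scalemxAl mxE.
by apply: mulr_ge0 (HA v); rewrite real_CE ler0c.
Qed.

End Positivity.

Lemma sld_trace_mul (R : realType) p (rho L D Y : 'M[R[i]]_p) :
  D = (2%:R : R[i])^-1 *: (L *m rho + rho *m L) ->
  2%:R * \tr (D *m Y) = \tr (rho *m (Y *m L)) + \tr (rho *m (L *m Y)).
Proof.
move=> ->; rewrite -scalemxAl mxtraceZ mulrA mulfV ?mul1r ?pnatr_eq0 //.
by rewrite mulmxDl mxtraceD -mulmxA mxtrace_mulC -!mulmxA.
Qed.

Section ComplexDerivative.
Variable R : realType.
Local Notation C := R[i].

Lemma is_derive_funext (f g : R -> R) (x d : R) :
  (forall y, f y = g y) -> is_derive x 1 f d -> is_derive x 1 g d.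
Proof. by move=> /boolp.funext ->. Qed.

Lemma is_derive_unique (f : R -> R) (x d1 d2 : R) :
  is_derive x 1 f d1 -> is_derive x 1 f d2 -> d1 = d2.
Proof.
by move=> d1f d2f; rewrite -(@derive_val _ _ _ _ _ _ _ d1f) (@derive_val _ _ _ _ _ _ _ d2f).
Qed.

Definition is_derivec (g : R -> C) (x : R) (d : C) : Prop :=
  is_derive x (1 : R) (fun y => complex.Re (g y)) (complex.Re d) /\
  is_derive x (1 : R) (fun y => complex.Im (g y)) (complex.Im d).

Lemma is_derivec_funext g1 g2 x d :
  (forall y, g1 y = g2 y) -> is_derivec g1 x d -> is_derivec g2 x d.
Proof. by move=> /boolp.funext ->. Qed.

Lemma is_derivec_unique g x d1 d2 : is_derivec g x d1 -> is_derivec g x d2 -> d1 = d2.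
Proof.
case: d1 d2 => [a1 b1] [a2 b2] [Re1 Im1] [Re2 Im2].
by move: (is_derive_unique Re1 Re2) (is_derive_unique Im1 Im2) => /= -> ->.
Qed.

Lemma is_derivec_add g1 g2 x d1 d2 : is_derivec g1 x d1 -> is_derivec g2 x d2 ->
  is_derivec (fun y => g1 y + g2 y) x (d1 + d2).
Proof.
move=> [Re1 Im1] [Re2 Im2]; split.
  by rewrite ReD; apply: is_derive_funext (is_deriveD Re1 Re2) => y; rewrite ReD.
by rewrite ImD; apply: is_derive_funext (is_deriveD Im1 Im2) => y; rewrite ImD.
Qed.

Lemma is_derivec_sum (I : finType) (g : I -> R -> C) x (d : I -> C) :
  (forall i, is_derivec (g i) x (d i)) ->
  is_derivec (fun y => \sum_i g i y) x (\sum_i d i).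
Proof.
move=> dg; elim: (index_enum I) => [|i s IH].
  by rewrite big_nil; split; apply: is_derive_funext (is_derive_cst (0 : R) x 1) => y;
    rewrite big_nil.
by rewrite big_cons; apply: is_derivec_funext (is_derivec_add (dg i) IH) => y; rewrite big_cons.
Qed.

Lemma is_derivecMl (c : C) g x d : is_derivec g x d -> is_derivec (fun y => c * g y) x (c * d).
Proof.
case: c => a b [dRe dIm]; split.
  apply: is_derive_funext (is_derive_eq (is_deriveB (is_deriveZ a dRe) (is_deriveZ b dIm)) _).
    by move=> y; rewrite [RHS](_ : _ = a * complex.Re (g y) - b * complex.Im (g y)) //; case: (g y).
  by case: d {dRe dIm}.
apply: is_derive_funext (is_derive_eq (is_deriveD (is_deriveZ a dIm) (is_deriveZ b dRe)) _).
  move=> y; rewrite [RHS](_ : _ = a * complex.Im (g y) + b * complex.Re (g y)) //.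
  by case: (g y) => u v /=; rewrite addrC.
by case: d {dRe dIm} => u v /=; rewrite addrC.
Qed.

Lemma is_derivec_realM (r : R -> R) (r' x : R) g d : is_derive x 1 r r' ->
  is_derivec g x d ->
  is_derivec (fun y => real_C (r y) * g y) x (real_C r' * g x + real_C (r x) * d).
Proof.
move=> dr [dRe dIm]; split.
  rewrite ReD !Re_realM; apply: is_derive_funext (is_derive_eq (is_deriveM dr dRe) _).
    by move=> y; rewrite Re_realM.
  by rewrite /GRing.scale /= addrC mulrC.
rewrite ImD !Im_realM; apply: is_derive_funext (is_derive_eq (is_deriveM dr dIm) _).
  by move=> y; rewrite Im_realM.
by rewrite /GRing.scale /= addrC mulrC.
Qed.

Lemma mx_is_derive_funext p q (F G : R -> 'M[C]_(p, q)) x D :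
  (forall y, F y = G y) -> mx_is_derive F x D -> mx_is_derive G x D.
Proof. by move=> /boolp.funext ->. Qed.

Lemma mx_is_derive_unique p q (F : R -> 'M[C]_(p, q)) x D1 D2 :
  mx_is_derive F x D1 -> mx_is_derive F x D2 -> D1 = D2.
Proof. by move=> dF1 dF2; apply/matrixP => i j; apply: is_derivec_unique (dF1 i j) (dF2 i j). Qed.

Lemma mx_is_derive_sum p q (I : finType) (F : I -> R -> 'M[C]_(p, q)) x D :
  (forall k, mx_is_derive (F k) x (D k)) ->
  mx_is_derive (fun y => \sum_k F k y) x (\sum_k D k).
Proof.
move=> dF i j; rewrite summxE.
by apply: is_derivec_funext (is_derivec_sum (fun k => dF k i j)) => y; rewrite summxE.
Qed.

Lemma mx_is_deriveMl r p q (A : 'M[C]_(r, p)) (F : R -> 'M[C]_(p, q)) x D :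
  mx_is_derive F x D -> mx_is_derive (fun y => A *m F y) x (A *m D).
Proof.
move=> dF i j; rewrite mxE.
by apply: is_derivec_funext (is_derivec_sum (fun k => is_derivecMl (A i k) (dF k j))) => y;
  rewrite mxE.
Qed.

Lemma mx_is_deriveMr r p q (B : 'M[C]_(q, r)) (F : R -> 'M[C]_(p, q)) x D :
  mx_is_derive F x D -> mx_is_derive (fun y => F y *m B) x (D *m B).
Proof.
move=> dF i j; rewrite mxE (eq_bigr (fun k => B k j * D i k)) => [|k _]; last exact: mulrC.
apply: is_derivec_funext (is_derivec_sum (fun k => is_derivecMl (B k j) (dF i k))) => y.
by rewrite mxE; apply: eq_bigr => k _; rewrite mulrC.
Qed.

Lemma mx_is_derive_realZ p q (r : R -> R) (r' x : R) (F : R -> 'M[C]_(p, q)) D :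
  is_derive x 1 r r' -> mx_is_derive F x D ->
  mx_is_derive (fun y => real_C (r y) *: F y) x (real_C r' *: F x + real_C (r x) *: D).
Proof.
move=> dr dF i j; rewrite !mxE.
by apply: is_derivec_funext (is_derivec_realM dr (dF i j)) => y; rewrite mxE.
Qed.

Lemma trace_is_derivec p (F : R -> 'M[C]_p) x D :
  mx_is_derive F x D -> is_derivec (fun y => \tr (F y)) x (\tr D).
Proof. by move=> dF; apply: is_derivec_sum => i; apply: dF. Qed.

End ComplexDerivative.

Section KrausMap.
Variable R : realType.
Local Notation C := R[i].
Variables (p q : nat) (I : finType) (K : I -> 'M[C]_(q, p)).

Definition kraus (A : 'M[C]_p) : 'M[C]_q := \sum_k K k *m A *m adjmx (K k).

Definition kraus_dual (Y : 'M[C]_q) : 'M[C]_p := \sum_k adjmx (K k) *m Y *m K k.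

Lemma psd_kraus A : psd A -> psd (kraus A).
Proof.
move=> psdA v; rewrite /kraus mulmx_sumr mulmx_suml summxE; apply: sumr_ge0 => k _.
have -> : adjmx v *m (K k *m A *m adjmx (K k)) *m v =
    adjmx (adjmx (K k) *m v) *m A *m (adjmx (K k) *m v).
  by rewrite adjmxM adjmxK !mulmxA.
exact: psdA.
Qed.

Lemma kraus_is_derive (F : R -> 'M[C]_p) x D :
  mx_is_derive F x D -> mx_is_derive (fun y => kraus (F y)) x (kraus D).
Proof. by move=> dF; apply: mx_is_derive_sum => k; apply/mx_is_deriveMr/mx_is_deriveMl. Qed.

Lemma trace_kraus_mul A Y : \tr (kraus A *m Y) = \tr (A *m kraus_dual Y).
Proof.
rewrite mulmx_suml mulmx_sumr !raddf_sum; apply: eq_bigr => k _ /=.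
by rewrite -!mulmxA mxtrace_mulC -!mulmxA.
Qed.

Lemma hermitian_kraus_dual Y : Defs.hermitian Y -> Defs.hermitian (kraus_dual Y).
Proof.
move=> hY; rewrite /Defs.hermitian raddf_sum; apply: eq_bigr => k _ /=.
by rewrite !adjmxM adjmxK hY mulmxA.
Qed.

(* The map need not be trace preserving: it suffices that [\sum_l K l^* K l]
   acts as the identity on the rows of every [K k]. *)
Hypothesis kraus_supp : forall k, K k *m (\sum_l adjmx (K l) *m K l) = K k.

Lemma kraus_dual_sqr_sub Y : Defs.hermitian Y ->
  kraus_dual (Y *m Y) - kraus_dual Y *m kraus_dual Y =
  \sum_k adjmx (Y *m K k - K k *m kraus_dual Y) *m (Y *m K k - K k *m kraus_dual Y).
Proof.
move=> hY; set G := kraus_dual Y.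
have GP : G *m (\sum_l adjmx (K l) *m K l) = G.
  by rewrite /G /kraus_dual !mulmx_suml; apply: eq_bigr => k _; rewrite -mulmxA kraus_supp.
transitivity (\sum_k (adjmx (K k) *m (Y *m Y) *m K k - adjmx (K k) *m Y *m K k *m G
    - G *m (adjmx (K k) *m Y *m K k) + G *m (adjmx (K k) *m K k) *m G)).
  rewrite !big_split /= !sumrN -!mulmx_suml -!mulmx_sumr GP.
  by rewrite -/(kraus_dual _) -/G subrK.
apply: eq_bigr => k _.
rewrite (raddfB (@adjmx R q p)) /= !adjmxM hY (hermitian_kraus_dual hY).
by rewrite mulmxBl !mulmxBr !mulmxA opprB addrA [in RHS]addrAC.
Qed.

Lemma qfi_kraus_bound (rho L D : 'M[C]_p) (Y : 'M[C]_q) :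
  psd rho -> Defs.hermitian L -> Defs.hermitian Y ->
  D = (2%:R : C)^-1 *: (L *m rho + rho *m L) ->
  2%:R * complex.Re (\tr (kraus D *m Y)) - complex.Re (\tr (kraus rho *m (Y *m Y)))
  <= complex.Re (\tr (rho *m (L *m L))).
Proof.
move=> psd_rho hL hY dD; rewrite !trace_kraus_mul; set G := kraus_dual Y.
have schwarz : complex.Re (\tr (rho *m (G *m G))) <= complex.Re (\tr (rho *m kraus_dual (Y *m Y))).
  rewrite -subr_ge0 -ReB -raddfB -mulmxBr kraus_dual_sqr_sub // mulmx_sumr Re_trace_sum.
  by apply: sumr_ge0 => k _; apply: Re_trace_psd_mul_ge0.
have square := Re_trace_psd_mul_ge0 (G - L) psd_rho.
rewrite (raddfB (@adjmx R p p)) /= (hermitian_kraus_dual hY) -/G hL mulmxBl !mulmxBr in square.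
rewrite !(raddfB (@mxtrace _ p)) !ReB in square.
have := congr1 (@complex.Re R) (sld_trace_mul G dD).
rewrite mulr_natl mulr2n !ReD.
move: schwarz square; set a := complex.Re (\tr (D *m G)).
set b := complex.Re (\tr (rho *m (G *m G))); set c := complex.Re (\tr (rho *m (G *m L))).
set d := complex.Re (\tr (rho *m (L *m G))); set e := complex.Re (\tr (rho *m (L *m L))).
set h := complex.Re (\tr (rho *m kraus_dual (Y *m Y))).
lra.
Qed.

Lemma qfi_kraus_le (rho : R -> 'M[C]_p) (sig : R -> 'M[C]_q) x L L' :
  (forall y, sig y = kraus (rho y)) -> psd (rho x) ->
  is_SLD rho x L -> is_SLD sig x L' -> qfi sig x L' <= qfi rho x L.
Proof.
move=> sigE psd_rho [hL [D [dD DE]]] [hL' [D' [dD' D'E]]].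
have D'_kraus : D' = kraus D.
  apply: mx_is_derive_unique dD' _.
  by apply: mx_is_derive_funext (kraus_is_derive dD) => y; rewrite sigE.
have := qfi_kraus_bound psd_rho hL hL' DE.
have := congr1 (@complex.Re R) (sld_trace_mul L' D'E).
rewrite /qfi -D'_kraus -sigE mulr_natl mulr2n !ReD.
set a := complex.Re _; set b := complex.Re _; set c := complex.Re _.
lra.
Qed.

Lemma qfi_kraus_normalized_le (rho : R -> 'M[C]_p) (sig : R -> 'M[C]_q) (pr : R -> R)
    x L L' :
  (forall y, kraus (rho y) = real_C (pr y) *: sig y) ->
  (forall y, complex.Re (\tr (sig y)) = 1) -> psd (rho x) ->
  is_SLD rho x L -> is_SLD sig x L' -> pr x * qfi sig x L' <= qfi rho x L.
Proof.
move=> krausE tr_sig psd_rho [hL [D [dD DE]]] [hL' [D' [dD' D'E]]].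
set pr' := complex.Re (\tr (kraus D)).
have dpr : is_derive x 1 pr pr'.
  apply: is_derive_funext (trace_is_derivec (kraus_is_derive dD)).1 => y.
  by rewrite krausE mxtraceZ Re_realM tr_sig mulr1.
have kraus_DE : kraus D = real_C pr' *: sig x + real_C (pr x) *: D'.
  apply: mx_is_derive_unique (kraus_is_derive dD) _.
  by apply: mx_is_derive_funext (mx_is_derive_realZ dpr dD') => y; rewrite krausE.
have trD' : complex.Re (\tr D') = 0.
  apply: is_derive_unique (trace_is_derivec dD').1 _.
  by apply: is_derive_funext (is_derive_cst (1 : R) x 1) => y; rewrite tr_sig.
have trL' : complex.Re (\tr (sig x *m L')) = 0.
  have := congr1 (@complex.Re R) (sld_trace_mul 1%:M D'E).
  rewrite !mulmx1 mul1mx mulr_natl mulr2n !ReD trD'.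
  set a := complex.Re _; lra.
have := qfi_kraus_bound psd_rho hL hL' DE.
have := congr1 (@complex.Re R) (sld_trace_mul L' D'E).
rewrite kraus_DE krausE /qfi mulmxDl -!scalemxAl mxtraceD !mxtraceZ !ReD !Re_realM trL' mulr0.
rewrite !mulr_natl !mulr2n !ReD add0r.
set a := complex.Re _; set b := complex.Re _; set c := complex.Re _.
move=> ab; have -> : a = b by lra.
lra.
Qed.

End KrausMap.

Lemma qfi_isometry_eq (R : realType) p q (V : 'M[R[i]]_(q, p)) (rho : R -> 'M[R[i]]_p)
    (sig : R -> 'M[R[i]]_q) x L L' :
  adjmx V *m V = 1%:M -> (forall y, sig y = V *m rho y *m adjmx V) -> psd (rho x) ->
  is_SLD rho x L -> is_SLD sig x L' -> qfi sig x L' = qfi rho x L.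
Proof.
move=> VV sigE psd_rho sld sld'.
have krausV A : kraus (fun _ : 'I_1 => V) A = V *m A *m adjmx V by rewrite /kraus big_ord1.
have krausV' A : kraus (fun _ : 'I_1 => adjmx V) A = adjmx V *m A *m V.
  by rewrite /kraus big_ord1 adjmxK.
apply/le_anti/andP; split.
  apply: (qfi_kraus_le (K := fun _ : 'I_1 => V)) sld sld' => // [k|y].
    by rewrite big_ord1 VV mulmx1.
  by rewrite krausV.
apply: (qfi_kraus_le (K := fun _ : 'I_1 => adjmx V)) sld' sld => [k|y|].
- by rewrite big_ord1 adjmxK mulmxA VV mul1mx.
- by rewrite krausV' sigE !mulmxA VV mul1mx -mulmxA VV mulmx1.
- by rewrite sigE -krausV; apply: psd_kraus.
Qed.

Section TensorKet.
Variable R : realType.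
Local Notation C := R[i].

Lemma sum_delta_mul p (u : 'I_p) (F : 'I_p -> C) : \sum_k (u == k)%:R * F k = F u.
Proof.
rewrite (bigD1 u) //= eqxx mul1r big1 ?addr0 // => k /negbTE.
by rewrite eq_sym => ->; rewrite mul0r.
Qed.

Lemma sum_mxtens_unindex p q (F : 'I_p * 'I_q -> C) :
  \sum_(i < p * q) F (mxtens_unindex i) = \sum_(a < p) \sum_(b < q) F (a, b).
Proof.
rewrite pair_big (reindex (@mxtens_index p q)) /=; last first.
  by exists (@mxtens_unindex p q) => ? _; rewrite (mxtens_indexK, mxtens_unindexK).
by apply: eq_bigr => -[a b] _; rewrite mxtens_indexK.
Qed.

(* The matrix of the linear map |psi> |-> |psi> (x) |g>. *)
Definition tens_ket n m (g : 'cV[C]_m) : 'M[C]_(n * m, n) :=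
  \matrix_(i, k) (((mxtens_unindex i).1 == k)%:R * g (mxtens_unindex i).2 0).

Lemma tens_ket_conj n m (g h : 'cV[C]_m) (A : 'M[C]_n) :
  tens_ket n g *m A *m adjmx (tens_ket n h) = A *t (g *m adjmx h).
Proof.
apply/matrixP => i j.
case: (mxtens_indexP i) => i1 i2; case: (mxtens_indexP j) => j1 j2.
rewrite tensmxE.
have gA l : (tens_ket n g *m A) (mxtens_index (i1, i2)) l = g i2 0 * A i1 l.
  rewrite mxE (eq_bigr (fun k => (i1 == k)%:R * (g i2 0 * A k l))) ?sum_delta_mul //.
  by move=> k _; rewrite mxE mxtens_indexK /= mulrA.
rewrite mxE (eq_bigr (fun l => (j1 == l)%:R * (g i2 0 * A i1 l * (h j2 0)^*%C))).
  rewrite sum_delta_mul mxE big_ord1 !mxE mulrCA mulrA; congr (_ * _); exact: mulrC.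
by move=> l _; rewrite gA adjmxE mxE mxtens_indexK /= rmorphM rmorph_nat mulrCA.
Qed.

Lemma adj_tens_ket_mul n m (g h : 'cV[C]_m) :
  adjmx (tens_ket n g) *m tens_ket n h = (adjmx g *m h) 0 0 *: 1%:M.
Proof.
apply/matrixP => k k'.
pose G ab := (k == ab.1)%:R * ((ab.1 == k')%:R * ((g ab.2 0)^*%C * h ab.2 0)).
rewrite mxE (eq_bigr (fun i => G (mxtens_unindex i))); last first.
  move=> i _; rewrite adjmxE !mxE rmorphM rmorph_nat /G /=.
  by rewrite [k == _]eq_sym -!mulrA; congr (_ * _); rewrite mulrCA.
rewrite sum_mxtens_unindex /G /= (eq_bigr (fun a => (k == a)%:R * ((a == k')%:R *
    \sum_(b < m) (g b 0)^*%C * h b 0))) => [|a _]; last by rewrite !mulr_sumr.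
rewrite sum_delta_mul !mxE mulrC; congr (_ * _); apply: eq_bigr => b _; by rewrite !mxE.
Qed.

End TensorKet.

Section StandardBasis.
Variables (R : realType) (n : nat).
Local Notation C := R[i].

Lemma adjmx_delta (k : 'I_n) : adjmx (delta_mx k 0 : 'cV[C]_n) = delta_mx 0 k.
Proof. by apply/matrixP => i j; rewrite adjmxE !mxE rmorph_nat andbC. Qed.

Lemma sum_delta_outer :
  \sum_(k < n) (delta_mx k 0 : 'cV[C]_n) *m adjmx (delta_mx k 0) = 1%:M.
Proof.
by rewrite mx1_sum_delta; apply: eq_bigr => k _; rewrite adjmx_delta mul_delta_mx.
Qed.

Lemma sum_delta_compress (A : 'M[C]_n) :
  \sum_(k < n) adjmx (delta_mx k 0 : 'cV[C]_n) *m A *m delta_mx k 0 = (\tr A)%:M.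
Proof.
apply/matrixP => i j; rewrite !ord1 summxE !mxE eqxx mulr1n.
by apply: eq_bigr => k _; rewrite adjmx_delta -rowE -colE !mxE.
Qed.

End StandardBasis.

Lemma sum_deltaZ (R : pzRingType) p q (I : finType) (P : pred I) a (F : I -> 'M[R]_(p, q)) :
  P a -> \sum_(b | P b) (a == b)%:R *: F b = F a.
Proof.
move=> Pa; rewrite (bigD1 a) //= eqxx scale1r big1 ?addr0 // => b /andP[_ /negbTE].
by rewrite eq_sym => ->; rewrite scale0r.
Qed.

Section SelectionMeasurement.
Variable R : realType.
Local Notation C := R[i].
Local Unset Implicit Arguments.
Variables (n m J : nat) (Ja : 'I_J -> nat)
  (M : forall a : 'I_J, 'I_(Ja a) -> 'M[C]_n) (rho : R -> 'M[C]_n)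
  (ok : {set 'I_J}) (f : 'I_J -> 'cV[C]_m) (f0 : 'cV[C]_m) (phi : 'cV[C]_n).
Hypotheses (Hrho : forall y, density (rho y))
  (Hkraus : \sum_(a < J) \sum_(j < Ja a) (adjmx (M a j) *m M a j) = 1%:M)
  (Hpos : forall a y, 0 < prob M rho a y)
  (Hok : forall y, 0 < prob_ok M rho ok y)
  (Hf : forall a b, adjmx (f a) *m f b = (a == b)%:R%:M)
  (Hf0 : adjmx f0 *m f0 = 1%:M)
  (Hf0ok : forall a, a \in ok -> adjmx (f a) *m f0 = 0)
  (Hphi : adjmx phi *m phi = 1%:M).
Local Set Implicit Arguments.

Local Notation p a y := (prob M rho a y).
Local Notation Q a y := (qop M a (rho y)).
Local Notation V a := (tens_ket n (f a)).
Local Notation w := (tens_ket n f0 *m phi).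

Lemma psd_rho y : psd (rho y).
Proof. by case: (Hrho y) => _ []. Qed.

Lemma psd_qop a y : psd (Q a y).
Proof. exact: (psd_kraus (M a) (psd_rho y)). Qed.

Lemma trace_qop a y : \tr (Q a y) = real_C (p a y).
Proof. exact: psd_trace_real (psd_qop a y). Qed.

Lemma sum_prob y : \sum_a p a y = 1.
Proof.
have [_ [_ tr1]] := Hrho y.
transitivity (complex.Re (\tr (rho y))); last by rewrite tr1.
rewrite -[in RHS](mul1mx (rho y)) -Hkraus mulmx_suml Re_trace_sum; apply: eq_bigr => a _.
rewrite /prob /qop mulmx_suml !Re_trace_sum; apply: eq_bigr => j _.
by rewrite mxtrace_mulC mulmxA.
Qed.

Lemma prob_no_sum y : prob_no M rho ok y = \sum_(a | a \notin ok) p a y.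
Proof.
by rewrite /prob_no /prob_ok -(sum_prob y) (bigID (mem ok)) /= addrAC subrr add0r.
Qed.

Lemma prob_sigma_cond a y : real_C (p a y) *: sigma_cond M rho a y = Q a y.
Proof.
by rewrite /sigma_cond scalerA -real_CM mulfV ?scale1r // lt0r_neq0.
Qed.

Lemma adj_tens_ket_f a b : adjmx (V a) *m V b = (a == b)%:R *: 1%:M.
Proof. by rewrite adj_tens_ket_mul Hf mxE eqxx mulr1n. Qed.

Lemma adj_tens_ket_f_w a : a \in ok -> adjmx (V a) *m w = 0.
Proof. by move=> a_ok; rewrite mulmxA adj_tens_ket_mul Hf0ok // mxE scale0r mul0mx. Qed.

Lemma adj_w_w : adjmx w *m w = 1%:M.
Proof.
rewrite adjmxM -mulmxA (mulmxA (adjmx (tens_ket n f0))) adj_tens_ket_mul Hf0.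
by rewrite mxE eqxx scale1r mul1mx Hphi.
Qed.

Lemma tens_ketbra_f a (A : 'M[C]_n) : A *t ketbra (f a) = V a *m A *m adjmx (V a).
Proof. by rewrite tens_ket_conj. Qed.

Lemma tens_ketbra_w : ketbra phi *t ketbra f0 = w *m adjmx w.
Proof. by rewrite -tens_ket_conj adjmxM !mulmxA. Qed.

Lemma branch_tens_ket a y :
  real_C (p a y) *: (sigma_cond M rho a y *t ketbra (f a)) = V a *m Q a y *m adjmx (V a).
Proof. by rewrite tens_ketbra_f scalemxAl scalemxAr prob_sigma_cond. Qed.

Lemma tens_ket_proj_sqr a :
  adjmx (V a *m adjmx (V a)) *m (V a *m adjmx (V a)) = V a *m adjmx (V a).
Proof.
by rewrite adjmxM adjmxK mulmxA -[V a *m _ *m V a]mulmxA adj_tens_ket_f eqxx scale1r mulmx1.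
Qed.

Lemma sigma_QA_sum y : sigma_QA M rho f y = \sum_a V a *m Q a y *m adjmx (V a).
Proof. by apply: eq_bigr => a _; rewrite branch_tens_ket. Qed.

Lemma compress_sum_tens_ket (P : pred 'I_J) a (F : 'I_J -> 'M[C]_n) : P a ->
  adjmx (V a) *m (\sum_(b | P b) V b *m F b *m adjmx (V b)) *m V a = F a.
Proof.
move=> Pa; rewrite mulmx_sumr mulmx_suml.
rewrite (eq_bigr (fun b => (a == b)%:R *: ((a == b)%:R *: F b))) => [|b _].
  by rewrite (sum_deltaZ _ Pa) eqxx scale1r.
rewrite !mulmxA adj_tens_ket_f -scalemxAl mul1mx -mulmxA.
by rewrite adj_tens_ket_f -scalemxAr mulmx1 eq_sym.
Qed.

Lemma compress_sigma_QA a y : adjmx (V a) *m sigma_QA M rho f y *m V a = Q a y.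
Proof. by rewrite sigma_QA_sum (@compress_sum_tens_ket xpredT). Qed.

Definition kraus_record (t : {a : 'I_J & 'I_(Ja a)}) : 'M[C]_(n * m, n) :=
  V (tag t) *m M (tag t) (tagged t).

Lemma sigma_QA_kraus y : sigma_QA M rho f y = kraus kraus_record (rho y).
Proof.
rewrite sigma_QA_sum /kraus -(sig_big_dep xpredT (fun _ _ => true)
  (fun a j => V a *m M a j *m rho y *m adjmx (V a *m M a j))) /=.
apply: eq_bigr => a _; rewrite /qop mulmx_sumr mulmx_suml.
by apply: eq_bigr => j _; rewrite adjmxM !mulmxA.
Qed.

Lemma kraus_record_complete : \sum_t adjmx (kraus_record t) *m kraus_record t = 1%:M.
Proof.
rewrite -Hkraus (sig_big_dep xpredT (fun _ _ => true) (fun a j => adjmx (M a j) *m M a j)) /=.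
apply: eq_bigr => t _.
by rewrite adjmxM -mulmxA (mulmxA (adjmx (V _))) adj_tens_ket_f eqxx scale1r mul1mx.
Qed.

Lemma psd_sigma_QA y : psd (sigma_QA M rho f y).
Proof. by rewrite sigma_QA_kraus; apply/psd_kraus/psd_rho. Qed.

Lemma qfi_sigma_QA_le x L1 L2 : is_SLD rho x L1 -> is_SLD (sigma_QA M rho f) x L2 ->
  qfi (sigma_QA M rho f) x L2 <= qfi rho x L1.
Proof.
apply: (qfi_kraus_le (K := kraus_record)) => [k|y|]; last exact: psd_rho.
  by rewrite kraus_record_complete mulmx1.
exact: sigma_QA_kraus.
Qed.

(* Outcomes in [ok] are kept; any other outcome [a] is traced out and replaced
   by [|phi>|f0>], through the operators [|phi f0><a, k|]. *)
Definition kraus_select (i : 'I_J + 'I_J * 'I_n) : 'M[C]_(n * m) :=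
  match i with
  | inl a => if a \in ok then V a *m adjmx (V a) else 0
  | inr (a, k) => if a \in ok then 0 else w *m adjmx (V a *m delta_mx k 0)
  end.

Lemma sum_select_index q (G : 'I_J + 'I_J * 'I_n -> 'M[C]_q) :
  \sum_i G i = \sum_a (G (inl a) + \sum_k G (inr (a, k))).
Proof.
rewrite big_sumType big_split /= pair_big /=.
by congr (_ + _); apply: eq_bigr => -[a k].
Qed.

Lemma adj_tens_ket_proj (P : pred 'I_J) a : P a ->
  adjmx (V a) *m (\sum_(b | P b) V b *m adjmx (V b)) = adjmx (V a).
Proof.
move=> Pa; rewrite mulmx_sumr (eq_bigr (fun b => (a == b)%:R *: adjmx (V b))) ?sum_deltaZ //.
by move=> b _; rewrite mulmxA adj_tens_ket_f -scalemxAl mul1mx.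
Qed.

Lemma kraus_select_sum :
  \sum_i adjmx (kraus_select i) *m kraus_select i = \sum_b V b *m adjmx (V b).
Proof.
rewrite sum_select_index; apply: eq_bigr => a _ /=.
have [a_ok|a_no] := boolP (a \in ok).
  by rewrite big1 ?addr0 ?tens_ket_proj_sqr // => k _; rewrite mulmx0.
rewrite mulmx0 add0r; transitivity (V a *m 1%:M *m adjmx (V a)); last by rewrite mulmx1.
rewrite -(sum_delta_outer R n) mulmx_sumr mulmx_suml.
apply: eq_bigr => k _.
by rewrite adjmxM adjmxK -mulmxA (mulmxA (adjmx w) w) adj_w_w mul1mx adjmxM !mulmxA.
Qed.

Lemma kraus_select_supp i :
  kraus_select i *m (\sum_j adjmx (kraus_select j) *m kraus_select j) = kraus_select i.
Proof.
rewrite kraus_select_sum; case: i => [a|[a k]] /=; case: ifP => _; rewrite ?mul0mx //.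
  by rewrite -mulmxA (@adj_tens_ket_proj xpredT).
by rewrite adjmxM -!mulmxA (@adj_tens_ket_proj xpredT).
Qed.

Lemma sigma_QA_ok_sum y : sigma_QA_ok M rho ok f f0 phi y =
  \sum_(a in ok) V a *m Q a y *m adjmx (V a) + real_C (prob_no M rho ok y) *: (w *m adjmx w).
Proof.
rewrite /sigma_QA_ok tens_ketbra_w; congr (_ + _).
by apply: eq_bigr => a _; rewrite branch_tens_ket.
Qed.

Lemma sigma_QA_ok_kraus y :
  kraus kraus_select (sigma_QA M rho f y) = sigma_QA_ok M rho ok f f0 phi y.
Proof.
rewrite /kraus sum_select_index.
transitivity (\sum_a (if a \in ok then V a *m Q a y *m adjmx (V a)
                      else \tr (Q a y) *: (w *m adjmx w))).
  apply: eq_bigr => a _ /=; case: ifP => a_ok.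
    rewrite big1 ?addr0 => [|k _]; last by rewrite !mul0mx.
    by rewrite -compress_sigma_QA adjmxM adjmxK !mulmxA.
  rewrite !mul0mx add0r scalemxAl -mul_mx_scalar -compress_sigma_QA -sum_delta_compress.
  rewrite mulmx_sumr mulmx_suml; apply: eq_bigr => k _.
  by rewrite !adjmxM !adjmxK !mulmxA.
rewrite sigma_QA_ok_sum (bigID (mem ok)) /=; congr (_ + _).
  by apply: eq_bigr => a a_ok; rewrite a_ok.
rewrite prob_no_sum real_CE rmorph_sum scaler_suml; apply: eq_bigr => a a_no.
by rewrite (negbTE a_no) trace_qop.
Qed.

Lemma qfi_sigma_QA_ok_le x L2 L3 : is_SLD (sigma_QA M rho f) x L2 ->
  is_SLD (sigma_QA_ok M rho ok f f0 phi) x L3 ->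
  qfi (sigma_QA_ok M rho ok f f0 phi) x L3 <= qfi (sigma_QA M rho f) x L2.
Proof.
apply: (qfi_kraus_le (K := kraus_select)) => [|y|]; first exact: kraus_select_supp.
  by rewrite sigma_QA_ok_kraus.
exact: psd_sigma_QA.
Qed.

Definition kraus_keep (a : 'I_J) : 'M[C]_(n * m) :=
  if a \in ok then V a *m adjmx (V a) else 0.

Lemma kraus_keep_supp a :
  kraus_keep a *m (\sum_b adjmx (kraus_keep b) *m kraus_keep b) = kraus_keep a.
Proof.
have -> : \sum_b adjmx (kraus_keep b) *m kraus_keep b = \sum_(b in ok) V b *m adjmx (V b).
  rewrite [RHS]big_mkcond; apply: eq_bigr => b _; rewrite /kraus_keep.
  by case: ifP => _; rewrite ?tens_ket_proj_sqr ?mulmx0.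
by rewrite /kraus_keep; case: ifP => a_ok; rewrite ?mul0mx // -mulmxA adj_tens_ket_proj.
Qed.

Lemma sigma_QA_cond_sum y :
  real_C (prob_ok M rho ok y) *: sigma_QA_cond M rho ok f y =
  \sum_(a in ok) V a *m Q a y *m adjmx (V a).
Proof.
rewrite /sigma_QA_cond scaler_sumr; apply: eq_bigr => a _.
by rewrite scalerA -real_CM mulrCA mulfV ?mulr1 ?lt0r_neq0 // branch_tens_ket.
Qed.

Lemma compress_sigma_QA_ok a y : a \in ok ->
  adjmx (V a) *m sigma_QA_ok M rho ok f f0 phi y *m V a = Q a y.
Proof.
move=> a_ok; rewrite sigma_QA_ok_sum mulmxDr mulmxDl -scalemxAr -scalemxAl.
by rewrite (mulmxA (adjmx (V a)) w) adj_tens_ket_f_w // !mul0mx scaler0 addr0 compress_sum_tens_ket.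
Qed.

Lemma kraus_keep_sigma_QA_ok y : kraus kraus_keep (sigma_QA_ok M rho ok f f0 phi y) =
  real_C (prob_ok M rho ok y) *: sigma_QA_cond M rho ok f y.
Proof.
rewrite sigma_QA_cond_sum /kraus [RHS]big_mkcond; apply: eq_bigr => a _.
rewrite /kraus_keep; case: ifP => a_ok; last by rewrite !mul0mx.
by rewrite -compress_sigma_QA_ok // adjmxM adjmxK !mulmxA.
Qed.

Lemma trace_sigma_QA_cond y : complex.Re (\tr (sigma_QA_cond M rho ok f y)) = 1.
Proof.
apply: (mulfI (lt0r_neq0 (Hok y))); rewrite mulr1 -Re_realM -mxtraceZ sigma_QA_cond_sum.
rewrite Re_trace_sum; apply: eq_bigr => a _.
by rewrite mxtrace_mulC mulmxA adj_tens_ket_f eqxx scale1r mul1mx trace_qop.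
Qed.

Lemma qfi_sigma_QA_cond_le x L3 L4 : is_SLD (sigma_QA_ok M rho ok f f0 phi) x L3 ->
  is_SLD (sigma_QA_cond M rho ok f) x L4 ->
  prob_ok M rho ok x * qfi (sigma_QA_cond M rho ok f) x L4 <=
  qfi (sigma_QA_ok M rho ok f f0 phi) x L3.
Proof.
apply: (qfi_kraus_normalized_le (K := kraus_keep)) => [|y|y|].
- exact: kraus_keep_supp.
- exact: kraus_keep_sigma_QA_ok.
- exact: trace_sigma_QA_cond.
- by rewrite -sigma_QA_ok_kraus; apply/psd_kraus/psd_sigma_QA.
Qed.

Lemma sigma_QA_cond_single a0 y : ok = [set a0] ->
  sigma_QA_cond M rho ok f y = V a0 *m sigma_cond M rho a0 y *m adjmx (V a0).
Proof.
move=> ok1; rewrite /sigma_QA_cond /prob_ok ok1 !big_set1 mulfV ?lt0r_neq0 //.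
by rewrite scale1r tens_ketbra_f.
Qed.

Lemma psd_sigma_cond a y : psd (sigma_cond M rho a y).
Proof. by apply: psd_realZ (psd_qop a y); rewrite invr_ge0 ltW. Qed.

Lemma qfi_sigma_QA_cond_single a0 x L4 L5 : ok = [set a0] ->
  is_SLD (sigma_QA_cond M rho ok f) x L4 -> is_SLD (sigma_cond M rho a0) x L5 ->
  prob_ok M rho ok x * qfi (sigma_QA_cond M rho ok f) x L4 =
  p a0 x * qfi (sigma_cond M rho a0) x L5.
Proof.
move=> ok1 sld4 sld5; rewrite /prob_ok ok1 big_set1 -ok1.
congr (_ * _); apply: (qfi_isometry_eq (V := V a0)) sld5 sld4 => [|y|]; last exact: psd_sigma_cond.
  by rewrite adj_tens_ket_f eqxx scale1r.
exact: sigma_QA_cond_single.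
Qed.

End SelectionMeasurement.
Unset Implicit Arguments.

Theorem theorem1 (R : realType) (n m J : nat) (Ja : 'I_J -> nat)
  (M : forall a : 'I_J, 'I_(Ja a) -> 'M[R[i]]_n)
  (rho : R -> 'M[R[i]]_n)
  (ok : {set 'I_J}) (f : 'I_J -> 'cV[R[i]]_m) (f0 : 'cV[R[i]]_m)
  (phi : 'cV[R[i]]_n) (x : R)
  (Hrho : forall y, density (rho y))
  (Hdiff : mx_differentiable rho)
  (Hkraus : \sum_(a < J) \sum_(j < Ja a) (adjmx (M a j) *m M a j) = 1%:M)
  (Hpos : forall a y, 0 < prob M rho a y)
  (Hok : forall y, 0 < prob_ok M rho ok y)
  (Hno : forall y, 0 < prob_no M rho ok y)
  (Hf : forall a b, adjmx (f a) *m f b = (a == b)%:R%:M)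
  (Hf0 : adjmx f0 *m f0 = 1%:M)
  (Hf0ok : forall a, a \in ok -> adjmx (f a) *m f0 = 0)
  (Hphi : adjmx phi *m phi = 1%:M) :
  (forall L1 L2 L3 L4 : 'M[R[i]]_ _,
     is_SLD rho x L1 ->
     is_SLD (sigma_QA M rho f) x L2 ->
     is_SLD (sigma_QA_ok M rho ok f f0 phi) x L3 ->
     is_SLD (sigma_QA_cond M rho ok f) x L4 ->
     qfi rho x L1 >= qfi (sigma_QA M rho f) x L2 /\
     qfi (sigma_QA M rho f) x L2 >= qfi (sigma_QA_ok M rho ok f f0 phi) x L3 /\
     qfi (sigma_QA_ok M rho ok f f0 phi) x L3 >=
       prob_ok M rho ok x * qfi (sigma_QA_cond M rho ok f) x L4) /\
  (forall a0 : 'I_J, ok = [set a0] ->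
   forall L4 L5,
     is_SLD (sigma_QA_cond M rho ok f) x L4 ->
     is_SLD (sigma_cond M rho a0) x L5 ->
     prob_ok M rho ok x * qfi (sigma_QA_cond M rho ok f) x L4 =
       prob M rho a0 x * qfi (sigma_cond M rho a0) x L5).
Proof.
split=> [L1 L2 L3 L4 sld1 sld2 sld3 sld4 | a0 ok1 L4 L5 sld4 sld5].
  split; [|split].
  - exact: (qfi_sigma_QA_le Hrho Hkraus Hpos Hf sld1 sld2).
  - exact: (qfi_sigma_QA_ok_le Hrho Hkraus Hpos Hf Hf0 Hphi sld2 sld3).
  - exact: (qfi_sigma_QA_cond_le Hrho Hkraus Hpos Hok Hf Hf0ok sld3 sld4).
exact: (qfi_sigma_QA_cond_single Hrho Hpos Hf ok1 sld4 sld5).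
Qed.
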